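(* Assume $|M|\ge 2$. Let $(T_{opt},B_{opt})$ be an optimal solution of an instance of MEMTCS and let $T_I$ be a minimum isotropic scattering tree for $M$. Then $(\Xi(T_I)+1)\,e_s+(|N(T_{opt})|-1)\,e_r\ \le\ 2\,\Pi(T_{opt},B_{opt})$.
   Context: Let $G=(V,E)$ be a finite, simple, undirected, connected graph with $|V|\ge 2$. Fix a positive integer $K$ and, for every $u\in V$, a nonempty set $\Gamma(u)\subseteq\{1,\dots,K\}$. For a tree $T$, $N(T)$ is its vertex set, $nb_T(u)$ the neighbours of $u$ in $T$, and $d^+(T)$ the set of vertices of degree greater than one in $T$; if $T$ is rooted, $nl(T)$ is its set of non-leaf vertices and $child(u,T)$ the set of children of $u$. A hitting set of a collection $\mathcal C$ of subsets of a finite set $\mathcal F$ is a subset of $\mathcal F$ meeting every member of $\mathcal C$. For a tree $T$ in $G$ and $u\in d^+(T)$, let $\Upsilon(u,T)$ be a minimum-cardinality hitting set of $\{\Gamma(v): v\in nb_T(u)\}$, and let $\Xi(T)=\sum_{u\in d^+(T)}|\Upsilon(u,T)|$. A minimum isotropic scattering tree $T_I$ for $M$ is a tree in $G$ with $M\subseteq N(T_I)$ minimizing $\Xi$ among all such trees. An instance of MEMTCS consists of $G,K,\Gamma$, a terminal set $M\subseteq V$, a source $s\in M$, and reals $e_s\ge e_r\ge 0$. A multicast tree is a subtree $T$ of $G$ with $M\subseteq N(T)$, rooted at $s$. A feasible schedule for $T$ is a function $B: nl(T)\to 2^{\{1,\dots,K\}}$ such that each $B(u)$ is a hitting set of $\{\Gamma(v):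 v\in child(u,T)\}$. Its cost is $\Pi(T,B)=\sum_{u\in nl(T)}|B(u)|\,e_s+(|N(T)|-1)\,e_r$. An optimal solution $(T_{opt},B_{opt})$ minimizes $\Pi$ over all pairs of a multicast tree and a feasible schedule for it. *)

From HB Require Import structures.
From mathcomp Require Import all_boot all_order all_algebra.
Set Implicit Arguments. Unset Strict Implicit. Unset Printing Implicit Defensive.
Import Order.TTheory GRing.Theory Num.Theory.

(* Channels {1..K} are represented by 'I_K (channel c+1 <-> ordinal c).
   A (sub)tree T of G is given by its vertex set S and its edge set
   ET : {set {set V}} (each edge an unordered pair {x,y}). *)

Section Defs.
Variables (V : finType) (e : rel V) (K : nat) (Gam : V -> {set 'I_K}).

Definition tadj (ET : {set {set V}}) : rel V :=
  fun x y => (x != y) && ([set x; y] \in ET).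

Definition is_tree (S : {set V}) (ET : {set {set V}}) : Prop :=
  [/\ (forall E, E \in ET ->
         exists x y, [/\ x != y, e x y, x \in S, y \in S & E = [set x; y]]),
      S != set0,
      (forall x y, x \in S -> y \in S -> connect (tadj ET) x y) &
      #|ET| = (#|S| - 1)%N].

Definition nbT (ET : {set {set V}}) (u : V) : {set V} := [set v | tadj ET u v].

Definition dplus (S : {set V}) (ET : {set {set V}}) : {set V} :=
  [set u in S | 1 < #|nbT ET u|].

Definition hitting (A : {set V}) (H : {set 'I_K}) : bool :=
  [forall v in A, [exists c in H, c \in Gam v]].

(* minimum cardinality of a hitting set of {Gam v : v in A}
   (= |Upsilon|; setT is always a hitting set when all Gam v are nonempty) *)
Definition min_hit (A : {set V}) : nat :=
  #|[arg min_(H < setT | hitting A H) #|H|]|.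

Definition Xi (S : {set V}) (ET : {set {set V}}) : nat :=
  (\sum_(u in dplus S ET) min_hit (nbT ET u))%N.

Definition childT (ET : {set {set V}}) (s u : V) : {set V} :=
  [set v | tadj ET u v && ~~ connect (tadj (ET :\ [set u; v])) s v].

Definition nlT (S : {set V}) (ET : {set {set V}}) (s : V) : {set V} :=
  [set u in S | childT ET s u != set0].

Definition feasible (S : {set V}) (ET : {set {set V}}) (s : V)
  (B : V -> {set 'I_K}) : Prop :=
  forall u, u \in nlT S ET s -> hitting (childT ET s u) (B u).

Definition multicast_tree (M S : {set V}) (ET : {set {set V}}) : Prop :=
  is_tree S ET /\ M \subset S.

Definition Pi (R : numDomainType) (es er : R) (S : {set V})
  (ET : {set {set V}}) (s : V) (B : V -> {set 'I_K}) : R :=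
  ((\sum_(u in nlT S ET s) (#|B u|)%:R * es) + (#|S| - 1)%:R * er)%R.

End Defs.

From HB Require Import structures.
From mathcomp Require Import all_boot all_order all_algebra zify.
Import Order.TTheory GRing.Theory Num.Theory.

Set Implicit Arguments. Unset Strict Implicit.

(* In the optimal tree rooted at s, every neighbour of a vertex u is a child of
   u except possibly its parent, and s has no parent.  Adding one channel for
   the parent to B(u) therefore hits all of nb(u), so
   Xi(T_opt) <= sum_{u in nl} (|B u| + [u != s]) < 2 sum_{u in nl} |B u|,
   because s is a non-leaf and every |B u| >= 1.  Minimality of T_I gives
   Xi(T_I) + 1 <= 2 sum |B u|; the relay term is bounded trivially. *)

Lemma connect_rank (T : finType) (r : rel T) (x : T) :
  exists d : T -> nat,
    forall y, connect r x y -> y != x -> exists2 z, r z y & d z < d y.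
Proof.
pose reach n y := [exists p : n.-tuple T, path r x p && (last x p == y)].
have reach_path p : path r x p -> reach (size p) (last x p).
  by move=> xp; apply/existsP; exists (in_tuple p); rewrite /= xp eqxx.
have ex_rank y : exists n, ~~ connect r x y || reach n y.
  case: (boolP (connect r x y)) => [/connectP[p xp ->]|]; last by exists 0.
  by exists (size p); rewrite reach_path.
exists (fun y => ex_minn (ex_rank y)) => y xy yx.
case: ex_minnP => m; rewrite xy /= => /existsP[p /andP[xp /eqP py]] _.
move: xp py (size_tuple p); case/lastP: (val p) => [/= _ py|q z].
  by rewrite py eqxx in yx.
rewrite rcons_path last_rcons size_rcons => /andP[xq qz] <- <-.
exists (last x q) => //; case: ex_minnP => k _ /(_ (size q)) le_kq.
by rewrite ltnS le_kq // reach_path ?orbT.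
Qed.

Section TreeAdjacency.
Variable V : finType.
Implicit Type E : {set {set V}}.

Lemma tadj_sym E : symmetric (tadj E).
Proof. by move=> x y; rewrite /tadj eq_sym setUC. Qed.

Lemma connect_tadj_sym E : connect_sym (tadj E).
Proof. exact/sym_connect_sym/tadj_sym. Qed.

Lemma connect_tadjS E1 E2 x y :
  E1 \subset E2 -> connect (tadj E1) x y -> connect (tadj E2) x y.
Proof.
move=> sE; apply: connect_sub => a b /andP[ab abE].
by rewrite connect1 // /tadj ab (subsetP sE).
Qed.

Lemma connect_tadjD1 E a b x y : connect (tadj E) x y ->
  [|| connect (tadj (E :\ [set a; b])) x y,
      connect (tadj (E :\ [set a; b])) x a |
      connect (tadj (E :\ [set a; b])) x b].
Proof.
move=> xy; set F := tadj (E :\ [set a; b]).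
pose P := [pred z | [|| connect F x z, connect F x a | connect F x b]].
have closedP : closed (tadj E) P.
  apply: intro_closed; first exact: connect_tadj_sym.
  move=> z w /andP[zw zwE]; rewrite !inE => /orP[xz|->]; last by rewrite orbT.
  have [ab|/negPf abn] := eqVneq [set z; w] [set a; b].
    have : z \in [set a; b] by rewrite -ab set21.
    by rewrite !inE => /orP[] /eqP zab; rewrite -zab xz ?orbT.
  have zwF : F z w by rewrite /F /tadj zw !inE abn zwE.
  by rewrite (connect_trans xz (connect1 zwF)).
by have := closed_connect closedP xy; rewrite !inE connect0 => <-.
Qed.

Lemma card_le_connected_edges E (S : {set V}) r :
  r \in S -> {in S, forall y, connect (tadj E) r y} -> #|S| <= #|E| + 1.
Proof.
move=> rS Sr; have [d rank] := connect_rank (tadj E) r.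
pose parent y := odflt y [pick z | tadj E z y && (d z < d y)].
have parentP y : y \in S :\ r -> tadj E (parent y) y && (d (parent y) < d y).
  rewrite !inE /parent => /andP[yr yS]; case: pickP => [z -> //|none].
  by have [z zy dz] := rank y (Sr y yS) yr; move: (none z); rewrite zy dz.
pose edge y := [set y; parent y].
have edge_inj : {in S :\ r &, injective edge}.
  move=> y1 y2 y1S y2S e12; apply/eqP/negPn/negP => y12.
  have /andP[_ d1] := parentP _ y1S; have /andP[_ d2] := parentP _ y2S.
  have : y1 \in edge y2 by rewrite -e12 set21.
  have : y2 \in edge y1 by rewrite e12 set21.
  rewrite !inE eq_sym (negPf y12) /= => /eqP p1 /eqP p2.
  by move: d1 d2; rewrite -p1 -p2 => /ltn_trans/[apply]; rewrite ltnn.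
have : edge @: (S :\ r) \subset E.
  apply/subsetP => _ /imsetP[y yS ->].
  by have /andP[/andP[_]] := parentP _ yS; rewrite setUC.
move/subset_leq_card; rewrite card_in_imset // => le_SE.
by rewrite (cardsD1 r S) rS addnC leq_add2r.
Qed.

End TreeAdjacency.

Section Tree.
Variables (V : finType) (e : rel V) (S : {set V}) (ET : {set {set V}}).
Hypothesis tree_T : is_tree e S ET.

Lemma tree_edge_ends a b : [set a; b] \in ET -> a \in S /\ b \in S.
Proof.
case: tree_T => edges _ _ _ /edges[x [y [_ _ xS yS xy]]].
have : a \in [set x; y] by rewrite -xy set21.
have : b \in [set x; y] by rewrite -xy set22.
by rewrite !inE => /orP[]/eqP-> /orP[]/eqP->.
Qed.

(* Otherwise S would stay connected with the |S| - 2 remaining edges. *)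
Lemma tree_bridge a b :
  tadj ET a b -> ~~ connect (tadj (ET :\ [set a; b])) a b.
Proof.
move=> /andP[ab abE]; have [aS bS] := tree_edge_ends abE.
case: tree_T => _ _ conn cardE; apply/negP => ab_cut.
have a_reach : {in S, forall y, connect (tadj (ET :\ [set a; b])) a y}.
  move=> y yS; rewrite connect_tadj_sym.
  case/or3P: (connect_tadjD1 a b (conn y a yS aS)) => // yb.
  by rewrite (connect_trans yb) // connect_tadj_sym.
have := card_le_connected_edges aS a_reach.
have : #|[set a; b]| <= #|S|.
  by apply/subset_leq_card/subsetP => z; rewrite !inE => /orP[]/eqP->.
rewrite cards2 ab (cardsD1 [set a; b] ET) abE /= in cardE *.
by set X := #|ET :\ _| in cardE *; lia.
Qed.

Lemma tadj_root_child s v : tadj ET s v -> v \in childT ET s s.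
Proof. by move=> sv; rewrite inE sv tree_bridge. Qed.

Lemma nonchild_uniq s u v1 v2 : tadj ET u v1 -> tadj ET u v2 ->
  v1 \notin childT ET s u -> v2 \notin childT ET s u -> v1 = v2.
Proof.
rewrite !inE => uv1 uv2; rewrite uv1 uv2 !negbK /= => sv1 sv2.
apply/eqP/negPn/negP => v12.
have su1 : ~~ connect (tadj (ET :\ [set u; v1])) s u.
  apply: contra (tree_bridge uv1) => su.
  by rewrite (connect_trans _ sv1) // connect_tadj_sym.
have su2 : ~~ connect (tadj (ET :\ [set u; v2])) s u.
  apply: contra (tree_bridge uv2) => su.
  by rewrite (connect_trans _ sv2) // connect_tadj_sym.
have e12 : [set u; v1] != [set u; v2].
  apply: contra v12 => /eqP e12; have : v1 \in [set u; v2] by rewrite -e12 set22.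
  by case/andP: uv1; rewrite !inE eq_sym => /negPf->.
have v2u : tadj (ET :\ [set u; v1]) v2 u.
  by case/andP: uv2 => uv2' uv2E; rewrite tadj_sym /tadj uv2' !inE eq_sym e12.
have v1u : tadj (ET :\ [set u; v2]) v1 u.
  by case/andP: uv1 => uv1' uv1E; rewrite tadj_sym /tadj uv1' !inE e12.
have sub12 : ET :\ [set u; v2] :\ [set u; v1] \subset ET :\ [set u; v1].
  exact/setSD/subD1set.
case/or3P: (connect_tadjD1 u v1 sv2) => sx.
- by rewrite (connect_trans (connect_tadjS sub12 sx) (connect1 v2u)) in su1.
- by rewrite (connect_tadjS (subD1set _ _) sx) in su2.
- have := connect_trans (connect_tadjS (subD1set _ _) sx) (connect1 v1u).
  by rewrite (negPf su2).
Qed.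

Lemma card_nbT_nonchild s u : #|nbT ET u :\: childT ET s u| <= (u != s).
Proof.
have [->|_] := eqVneq u s.
  rewrite leqn0 cards_eq0 setD_eq0.
  by apply/subsetP => v; rewrite inE => /tadj_root_child.
apply/card_le1_eqP => v1 v2 /setDP[uv1 nc1] /setDP[uv2 nc2].
rewrite !inE in uv1 uv2; exact: nonchild_uniq uv2 uv1 nc2 nc1.
Qed.

End Tree.

Section Hitting.
Variables (V : finType) (K : nat) (Gam : V -> {set 'I_K}).
Hypothesis Gam_ne : forall v, Gam v != set0.

Lemma min_hit_le A H : hitting Gam A H -> min_hit Gam A <= #|H|.
Proof.
move=> hitH; rewrite /min_hit; case: arg_minnP => [|H0 _ minH0]; last exact: minH0.
apply/forall_inP => v _; case/set0Pn: (Gam_ne v) => c cv.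
by apply/exists_inP; exists c; rewrite ?inE.
Qed.

(* One extra channel per vertex of D hits whatever H misses. *)
Lemma min_hit_le_cover (A C D : {set V}) H :
  hitting Gam C H -> A \subset C :|: D -> min_hit Gam A <= #|H| + #|D|.
Proof.
move=> hitH sACD.
have /fin_all_exists[f fP] v : exists c, c \in Gam v by apply/set0Pn.
apply: leq_trans (min_hit_le (H := H :|: f @: D) _) _.
  apply/forall_inP => v /(subsetP sACD); rewrite inE => /orP[vC|vD].
    have /exists_inP[c cH cv] := forall_inP hitH v vC.
    by apply/exists_inP; exists c; rewrite ?inE ?cH.
  by apply/exists_inP; exists (f v); rewrite ?inE ?imset_f ?orbT.
by rewrite (leq_trans (leq_card_setU _ _)) ?leq_add2l ?leq_imset_card.
Qed.

End Hitting.

Section Schedule.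
Variables (V : finType) (e : rel V) (K : nat) (Gam : V -> {set 'I_K}).
Hypothesis Gam_ne : forall v, Gam v != set0.
Variables (M S : {set V}) (ET : {set {set V}}) (s : V) (B : V -> {set 'I_K}).
Hypotheses (tree_T : is_tree e S ET) (sub_MS : M \subset S).
Hypotheses (s_in : s \in M) (M_ge2 : 1 < #|M|).
Hypothesis feasB : feasible Gam S ET s B.

Lemma dplus_sub_nlT : dplus S ET \subset nlT S ET s.
Proof.
apply/subsetP => u; rewrite !inE => /andP[-> nb_gt1] /=.
apply: contraTneq nb_gt1 => noC; rewrite -leqNgt.
by rewrite -[nbT ET u]setD0 -noC (leq_trans (card_nbT_nonchild tree_T s u)) ?leq_b1.
Qed.

Lemma min_hit_nbT_le u : u \in dplus S ET ->
  min_hit Gam (nbT ET u) <= #|B u| + (u != s).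
Proof.
move=> ud; have hitB := feasB (subsetP dplus_sub_nlT u ud).
pose D := nbT ET u :\: childT ET s u.
apply: leq_trans (min_hit_le_cover Gam_ne (D := D) hitB _) _.
  by apply/subsetP => v vN; rewrite in_setU in_setD vN andbT orbN.
by rewrite leq_add2l (card_nbT_nonchild tree_T).
Qed.

Lemma Xi_le_schedule :
  Xi Gam S ET <= \sum_(u in nlT S ET s) (#|B u| + (u != s)).
Proof.
apply: (@leq_trans (\sum_(u in dplus S ET) (#|B u| + (u != s)))).
  exact: leq_sum min_hit_nbT_le.
apply: (sub_le_big leqnn (fun m n => leq_addr n m)).
exact/subsetP/dplus_sub_nlT.
Qed.

Lemma root_in_nlT : s \in nlT S ET s.
Proof.
have sS := subsetP sub_MS s s_in.
have /set0Pn[y] : M :\ s != set0.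
  by have := M_ge2; rewrite (cardsD1 s M) s_in add1n ltnS card_gt0.
rewrite !inE sS => /andP[ys /(subsetP sub_MS) yS] /=.
case: tree_T => _ _ /(_ s y sS yS) /connectP[[|z p] /=].
  by move=> _ ysE; rewrite ysE eqxx in ys.
by case/andP=> sz _ _ _; apply/set0Pn; exists z; apply: (tadj_root_child tree_T).
Qed.

Lemma card_schedule_gt0 u : u \in nlT S ET s -> 0 < #|B u|.
Proof.
move=> unl; have /forall_inP hitB := feasB unl.
move: unl; rewrite inE => /andP[_ /set0Pn[v /hitB /exists_inP[c cB _]]].
by apply/card_gt0P; exists c.
Qed.

(* The root contributes [u != s] = 0 but |B s| >= 1, and [u != s] <= |B u|
   for the other non-leaves. *)
Lemma Xi_lt_twice_schedule : Xi Gam S ET < 2 * \sum_(u in nlT S ET s) #|B u|.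
Proof.
apply: leq_ltn_trans Xi_le_schedule _; rewrite big_split /= mul2n -addnn ltn_add2l.
rewrite (bigD1 s root_in_nlT) [X in _ < X](bigD1 s root_in_nlT) /= eqxx.
rewrite add0n -add1n leq_add ?card_schedule_gt0 ?root_in_nlT //.
by apply: leq_sum => u /andP[unl _]; rewrite (leq_trans (leq_b1 _)) ?card_schedule_gt0.
Qed.

End Schedule.

Local Open Scope ring_scope.

Theorem mainTheorem13
  (R : realFieldType) (V : finType) (e : rel V)
  (e_sym : symmetric e) (e_irr : irreflexive e)
  (G_conn : forall x y : V, connect e x y) (V_ge2 : (2 <= #|V|)%N)
  (K : nat) (K_pos : (0 < K)%N) (Gam : V -> {set 'I_K})
  (Gam_ne : forall u, Gam u != set0)
  (M : {set V}) (s : V) (s_in : s \in M) (M_ge2 : (2 <= #|M|)%N)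
  (es er : R) (er_ge0 : 0 <= er) (er_le_es : er <= es)
  (* optimal solution (T_opt, B_opt) *)
  (Sopt : {set V}) (ETopt : {set {set V}}) (Bopt : V -> {set 'I_K})
  (opt_tree : multicast_tree e M Sopt ETopt)
  (opt_feas : feasible Gam Sopt ETopt s Bopt)
  (opt_min : forall (S : {set V}) (ET : {set {set V}}) (B : V -> {set 'I_K}),
      multicast_tree e M S ET -> feasible Gam S ET s B ->
      Pi es er Sopt ETopt s Bopt <= Pi es er S ET s B)
  (* minimum isotropic scattering tree T_I for M *)
  (SI : {set V}) (ETI : {set {set V}})
  (TI_tree : is_tree e SI ETI) (TI_M : M \subset SI)
  (TI_min : forall (S : {set V}) (ET : {set {set V}}),
      is_tree e S ET -> M \subset S -> (Xi Gam SI ETI <= Xi Gam S ET)%N) :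
  ((Xi Gam SI ETI).+1)%:R * es + (#|Sopt| - 1)%:R * er
    <= 2%:R * Pi es er Sopt ETopt s Bopt.
Proof.
have es_ge0 : 0 <= es := le_trans er_ge0 er_le_es.
have Xi_opt := Xi_lt_twice_schedule Gam_ne opt_tree.1 opt_tree.2 s_in M_ge2 opt_feas.
have Xi_TI := TI_min _ _ opt_tree.1 opt_tree.2.
rewrite /Pi mulrDr -mulr_suml -natr_sum mulrA -natrM; apply: lerD.
  by rewrite ler_wpM2r // ler_nat (leq_ltn_trans Xi_TI).
by rewrite ler_peMl ?mulr_ge0 // ler1n.
Qed.
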